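(* Let $\widetilde\gamma$ be a $G$-invariant Kähler metric on $\widetilde M_2$, written (for some smooth $A:(0,\infty)\to\mathbb{R}$) as $\widetilde\gamma=A_1ds^2+A_2\sigma_1^2+A_3\sigma_2^2+A_4\sigma_3^2$ with $A_1=\frac{1}{8\sinh(s/2)}\frac{d}{ds}\big(\frac{A}{\cosh(s/2)}\big)$, $A_2=A$, $A_3=2\sinh(s/2)\frac{d}{ds}\big(\frac{A}{\cosh(s/2)}\big)$, $A_4=\frac{A}{\cosh^2(s/2)}$. Then its Ricci tensor is $$\mathrm{Ric}=C_1(s)\,ds^2+C_2(s)\,\sigma_1^2+C_3(s)\,\sigma_2^2+C_4(s)\,\sigma_3^2,$$ where $C_1,\dots,C_4$ are obtained from the function $$C(s)=-4\sinh(s/2)\cosh(s/2)\frac{d}{ds}\log\Big(\frac{A_1A_2}{\cosh^2(s/2)}\Big)-8\cosh^2(s/2)$$ by the same rule, i.e. $C_1=\frac{1}{8\sinh(s/2)}\frac{d}{ds}\big(\frac{C}{\cosh(s/2)}\big)$, $C_2=C$, $C_3=2\sinh(s/2)\frac{d}{ds}\big(\frac{C}{\cosh(s/2)}\big)$, $C_4=\frac{C}{\cosh^2(s/2)}$.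
   Context: $\mathbb{H}^2=\{x+iy:y>0\}$; $\widetilde M_2=\mathbb{H}^2\times\mathbb{H}^2\setminus\{(z,z)\}$ with the product complex structure. $PL(2,\mathbb{R})$ (real $2\times2$ matrices of positive determinant modulo scalars) acts diagonally by Möbius transformations $z\mapsto(az+b)/(cz+d)$; $P:(z_1,z_2)\mapsto(z_2,z_1)$; $G=PL(2,\mathbb{R})\times\{\mathrm{Id},P\}$. For $s>0$, $w_s=(ie^{s/2},ie^{-s/2})$, and $(s,g)\mapsto g\cdot w_s$ identifies $(0,\infty)\times PL(2,\mathbb{R})\cong\widetilde M_2$. $\sigma_1,\sigma_2,\sigma_3$ are the left-invariant 1-forms on $PL(2,\mathbb{R})$ dual to the left-invariant fields generated by $e_1=\begin{pmatrix}0&1\\1&0\end{pmatrix}$, $e_2=\begin{pmatrix}0&1\\-1&0\end{pmatrix}$, $e_3=\begin{pmatrix}1&0\\0&-1\end{pmatrix}$, pulled back to $\widetilde M_2$. Juxtaposition of 1-forms denotes symmetric product. *)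

From Stdlib Require Import Reals ClassicalEpsilon.
Open Scope R_scope.

(* [Dv f x] is the derivative of [f] at [x] whenever [f] is differentiable at
   [x] (the limit is unique); an unspecified real otherwise. *)
Definition Dv (f : R -> R) (x : R) : R :=
  epsilon (inhabits 0) (fun l => derivable_pt_lim f x l).

Definition smooth_pos (A : R -> R) : Prop :=
  exists f : nat -> R -> R,
    (forall x, f O x = A x) /\
    (forall n s, 0 < s -> derivable_pt_lim (f n) s (f (S n) s)).

(* Index I0 <-> d/ds (dual ds); Ik <-> left-invariant field generated by e_k
   (dual sigma_k), k = 1,2,3. *)
Inductive idx := I0 | I1 | I2 | I3.

Definition idx_eqb (a b : idx) : bool :=
  match a, b with
  | I0, I0 | I1, I1 | I2, I2 | I3, I3 => true
  | _, _ => false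
  end.

Definition sum4 (f : idx -> R) : R := f I0 + f I1 + f I2 + f I3.

(* 2x2 real matrices (a,b,c,d) = [[a,b],[c,d]] *)
Definition mat := (R * R * R * R)%type.
Definition mmul (m n : mat) : mat :=
  let '(a, b, c, d) := m in let '(a', b', c', d') := n in
  (a*a' + b*c', a*b' + b*d', c*a' + d*c', c*b' + d*d').
Definition msub (m n : mat) : mat :=
  let '(a, b, c, d) := m in let '(a', b', c', d') := n in
  (a - a', b - b', c - c', d - d').
Definition mbracket (m n : mat) : mat := msub (mmul m n) (mmul n m).

Definition e1 : mat := (0, 1, 1, 0).
Definition e2 : mat := (0, 1, -1, 0).
Definition e3 : mat := (1, 0, 0, -1).

(* coordinates of a traceless matrix [[a,b],[c,-a]] in the basis e1,e2,e3:
   ((b+c)/2) e1 + ((b-c)/2) e2 + a e3 *)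
Definition coord (k : idx) (m : mat) : R :=
  let '(a, b, c, _) := m in
  match k with
  | I0 => 0
  | I1 => (b + c) / 2
  | I2 => (b - c) / 2
  | I3 => a
  end.

Definition emat (a : idx) : option mat :=
  match a with I0 => None | I1 => Some e1 | I2 => Some e2 | I3 => Some e3 end.

(* structure functions of the frame: [E_a, E_b] = sum_m cst m a b E_m.
   d/ds commutes with the left-invariant fields; left-invariant fields
   bracket as the Lie algebra elements. *)
Definition cst (m a b : idx) : R :=
  match emat a, emat b with
  | Some x, Some y => coord m (mbracket x y)
  | _, _ => 0
  end.

(** * Levi-Civita connection and Ricci tensor of a G-invariant diagonal metric
    g = g I0 ds^2 + g I1 sigma1^2 + g I2 sigma2^2 + g I3 sigma3^2,
    whose coefficients depend on s only. *)
Definition Ef (a : idx) (f : R -> R) (s : R) : R :=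
  match a with I0 => Dv f s | _ => 0 end.

Definition gm (g : idx -> R -> R) (i j : idx) (s : R) : R :=
  if idx_eqb i j then g i s else 0.

Definition cl (g : idx -> R -> R) (a b k : idx) (s : R) : R :=
  sum4 (fun m => cst m a b * gm g m k s).

(* Koszul formula: Gl a b c = g(nabla_{E_a} E_b, E_c) *)
Definition Gl (g : idx -> R -> R) (a b c : idx) (s : R) : R :=
  / 2 * (Ef a (gm g b c) s + Ef b (gm g a c) s - Ef c (gm g a b) s
         + cl g a b c s - cl g a c b s - cl g b c a s).

(* Gu a b e = Gamma^e_{ab}, nabla_{E_a} E_b = sum_e Gu a b e E_e *)
Definition Gu (g : idx -> R -> R) (a b e : idx) (s : R) : R :=
  Gl g a b e s / g e s.

(* e-th component of R(E_a,E_b)E_c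
   = nabla_a nabla_b E_c - nabla_b nabla_a E_c - nabla_{[E_a,E_b]} E_c *)
Definition Riem (g : idx -> R -> R) (a b c e : idx) (s : R) : R :=
  Ef a (Gu g b c e) s - Ef b (Gu g a c e) s
  + sum4 (fun d => Gu g b c d s * Gu g a d e s - Gu g a c d s * Gu g b d e s)
  - sum4 (fun m => cst m a b * Gu g m c e s).

(* Ric(E_b, E_c) = trace (X |-> R(X,E_b)E_c) *)
Definition Ric (g : idx -> R -> R) (b c : idx) (s : R) : R :=
  sum4 (fun a => Riem g a b c a s).

Definition coeffs (A : R -> R) (i : idx) (s : R) : R :=
  match i with
  | I0 => / (8 * sinh (s / 2)) * Dv (fun t => A t / cosh (t / 2)) s
  | I1 => A s
  | I2 => 2 * sinh (s / 2) * Dv (fun t => A t / cosh (t / 2)) s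
  | I3 => A s / (cosh (s / 2)) ^ 2
  end.

Definition Cfun (A : R -> R) (s : R) : R :=
  - 4 * sinh (s / 2) * cosh (s / 2)
      * Dv (fun t => ln (coeffs A I0 t * coeffs A I1 t / (cosh (t / 2)) ^ 2)) s
  - 8 * (cosh (s / 2)) ^ 2.

(* Put B = A / cosh(s/2).  Every coefficient of the metric is B or B' times
   an explicit function of sinh(s/2) and cosh(s/2).  For a metric that is
   diagonal in the frame and depends on s only, Koszul's formula makes the
   Christoffel symbols, hence the Ricci tensor, rational in the coefficients
   and their first two derivatives.  Both sides of the claim thus become
   rational functions of B, B', B'', B''' and e^(s/2), and agree identically;
   positivity of the metric keeps the denominators away from zero. *)

From Stdlib Require Import Reals Lra Lia ClassicalEpsilon.
From Coquelicot Require Import Coquelicot.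
Open Scope R_scope.

Lemma Dv_is_derive (f : R -> R) (x l : R) : is_derive f x l -> Dv f x = l.
Proof.
  intro Hf. apply is_derive_Reals in Hf. unfold Dv.
  apply (uniqueness_limite f x); [apply epsilon_spec; now exists l | exact Hf].
Qed.

Lemma is_derive_ext_pos (f h : R -> R) (x l : R) :
  0 < x -> (forall t, 0 < t -> f t = h t) -> is_derive h x l -> is_derive f x l.
Proof.
  intros Hx Hfh Hh. apply (is_derive_ext_loc h); [|exact Hh].
  exists (mkposreal x Hx). intros y Hy. symmetry. apply Hfh.
  change (Rabs (y - x) < x) in Hy. apply Rabs_def2 in Hy. lra.
Qed.

Lemma Dv_ext_pos (f h : R -> R) (x l : R) :
  0 < x -> (forall t, 0 < t -> f t = h t) -> is_derive h x l -> Dv f x = l.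
Proof. intros; eapply Dv_is_derive, is_derive_ext_pos; eauto. Qed.

Definition sh (t : R) : R := sinh (t / 2).
Definition ch (t : R) : R := cosh (t / 2).

Lemma is_derive_sh t : is_derive sh t (ch t / 2).
Proof. unfold sh, ch, sinh, cosh. auto_derive; [auto | unfold Rdiv; ring]. Qed.

Lemma is_derive_ch t : is_derive ch t (sh t / 2).
Proof. unfold sh, ch, sinh, cosh. auto_derive; [auto | unfold Rdiv; ring]. Qed.

Lemma Derive_sh t : Derive (fun x => sh x) t = ch t / 2.
Proof. apply is_derive_unique, is_derive_sh. Qed.

Lemma Derive_ch t : Derive (fun x => ch x) t = sh t / 2.
Proof. apply is_derive_unique, is_derive_ch. Qed.

Lemma ex_derive_sh t : ex_derive (fun x => sh x) t.
Proof. eexists; apply is_derive_sh. Qed.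

Lemma ex_derive_ch t : ex_derive (fun x => ch x) t.
Proof. eexists; apply is_derive_ch. Qed.

Lemma ch_pos t : 0 < ch t.
Proof.
  unfold ch, cosh. pose proof (exp_pos (t / 2)). pose proof (exp_pos (- (t / 2))). lra.
Qed.

Lemma sh_pos t : 0 < t -> 0 < sh t.
Proof.
  intro Ht. unfold sh, sinh.
  assert (exp (- (t / 2)) < exp (t / 2)) by (apply exp_increasing; lra). lra.
Qed.

Ltac derive_side :=
  repeat match goal with
  | |- _ /\ _ => split
  | |- True => exact I
  | |- ex_derive (fun x => sh x) _ => apply ex_derive_sh
  | |- ex_derive (fun x => ch x) _ => apply ex_derive_ch
  | |- _ * _ <> 0 => apply Rmult_integral_contrapositive_currified
  | |- _ ^ _ <> 0 => apply pow_nonzero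
  | |- / _ <> 0 => apply Rinv_neq_0_compat
  | |- _ <> 0 => lra
  end.

Section Leibniz.
Variables p q : nat -> R -> R.

Definition leibniz (k : nat) (x : R) : R :=
  match k with
  | O => p 0 x * q 0 x
  | S O => p 1 x * q 0 x + p 0 x * q 1 x
  | S (S O) => p 2 x * q 0 x + 2 * p 1 x * q 1 x + p 0 x * q 2 x
  | _ => p 3 x * q 0 x + 3 * p 2 x * q 1 x + 3 * p 1 x * q 2 x + p 0 x * q 3 x
  end.

Lemma is_derive_leibniz k t : (k <= 2)%nat ->
  (forall n, (n <= k)%nat -> is_derive (p n) t (p (S n) t)) ->
  (forall n, (n <= k)%nat -> is_derive (q n) t (q (S n) t)) ->
  is_derive (leibniz k) t (leibniz (S k) t).
Proof.
  intros Hk Hp Hq.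
  assert (Dp : forall n, (n <= k)%nat -> Derive (fun x => p n x) t = p (S n) t)
    by (intros; apply is_derive_unique, Hp; auto).
  assert (Dq : forall n, (n <= k)%nat -> Derive (fun x => q n x) t = q (S n) t)
    by (intros; apply is_derive_unique, Hq; auto).
  destruct k as [|[|[|k]]]; try lia; unfold leibniz; auto_derive;
    try (repeat split; match goal with
      | |- ex_derive (fun x => p ?n x) _ => exists (p (S n) t); apply Hp; lia
      | |- ex_derive (fun x => q ?n x) _ => exists (q (S n) t); apply Hq; lia
      end);
    rewrite ?Dp, ?Dq by lia; ring.
Qed.

End Leibniz.

(* [coeffs A i = (A / ch)^(ord i) * wt i 0], and [wt i n] is the [n]-th
   derivative of [wt i 0]. *)
Definition ord (i : idx) : nat := match i with I0 | I2 => 1%nat | _ => 0%nat end.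

Definition wt (i : idx) (n : nat) (t : R) : R :=
  match i, n with
  | I0, O => / (8 * sh t)
  | I0, S O => - ch t / (16 * sh t ^ 2)
  | I0, S (S O) => - / (32 * sh t) + ch t ^ 2 / (16 * sh t ^ 3)
  | I0, _ => 5 * ch t / (64 * sh t ^ 2) - 3 * ch t ^ 3 / (32 * sh t ^ 4)
  | I1, O => ch t
  | I1, S O => sh t / 2
  | I1, S (S O) => ch t / 4
  | I1, _ => sh t / 8
  | I2, O => 2 * sh t
  | I2, S O => ch t
  | I2, S (S O) => sh t / 2
  | I2, _ => ch t / 4
  | I3, O => / ch t
  | I3, S O => - sh t / (2 * ch t ^ 2)
  | I3, S (S O) => - / (4 * ch t) + sh t ^ 2 / (2 * ch t ^ 3)
  | I3, _ => 5 * sh t / (8 * ch t ^ 2) - 3 * sh t ^ 3 / (4 * ch t ^ 4)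
  end.

Lemma is_derive_wt i n t : (n <= 2)%nat -> 0 < t -> is_derive (wt i n) t (wt i (S n) t).
Proof.
  intros Hn Ht. pose proof (sh_pos t Ht). pose proof (ch_pos t).
  destruct i, n as [|[|[|n]]]; try lia; cbv beta iota delta [wt];
    auto_derive; derive_side; rewrite ?Derive_sh, ?Derive_ch; field; derive_side.
Qed.

(* Koszul's formula for a frame-diagonal metric depending on [s] only: the
   structure constants enter through the coefficients, [E_0 = d/ds] through
   their derivatives. *)
Definition koszul_cst (a b c i : idx) : R :=
  / 2 * ((if idx_eqb i c then cst c a b else 0) - (if idx_eqb i b then cst b a c else 0)
         - (if idx_eqb i a then cst a b c else 0)).

Definition koszul_der (a b c i : idx) : R :=
  / 2 * ((if idx_eqb a I0 && idx_eqb b c && idx_eqb i b then 1 else 0)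
       + (if idx_eqb b I0 && idx_eqb a c && idx_eqb i a then 1 else 0)
       - (if idx_eqb c I0 && idx_eqb a b && idx_eqb i a then 1 else 0))%bool.

Definition christoffel_low (v d : idx -> R) (a b c : idx) : R :=
  sum4 (fun i => koszul_cst a b c i * v i + koszul_der a b c i * d i).

Lemma Dv_gm g i j t : Dv (gm g i j) t = if idx_eqb i j then Dv (g i) t else 0.
Proof.
  destruct i, j; simpl; try reflexivity;
    apply Dv_is_derive; unfold gm; simpl; auto_derive; auto.
Qed.

Lemma Gl_diag g a b c t :
  Gl g a b c t = christoffel_low (fun i => g i t) (fun i => Dv (g i) t) a b c.
Proof.
  destruct a, b, c; unfold Gl, cl, christoffel_low, koszul_cst, koszul_der, sum4;
    cbn [Ef]; rewrite ?Dv_gm; unfold gm; cbn [idx_eqb andb]; ring.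
Qed.

Section DiagonalMetric.
Variables g g' g'' : idx -> R -> R.
Hypothesis is_derive_g : forall i t, 0 < t -> is_derive (g i) t (g' i t).
Hypothesis is_derive_g' : forall i t, 0 < t -> is_derive (g' i) t (g'' i t).
Hypothesis g_pos : forall t, 0 < t -> forall i, 0 < g i t.

Lemma Gu_diag a b e t : 0 < t ->
  Gu g a b e t = christoffel_low (fun i => g i t) (fun i => g' i t) a b e / g e t.
Proof.
  intro Ht. assert (Hd : forall i, Dv (g i) t = g' i t)
    by (intro; apply Dv_is_derive, is_derive_g, Ht).
  unfold Gu. rewrite Gl_diag. unfold christoffel_low, sum4. rewrite !Hd. reflexivity.
Qed.

Lemma is_derive_christoffel_low a b e t : 0 < t ->
  is_derive (fun x => christoffel_low (fun i => g i x) (fun i => g' i x) a b e) t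
    (christoffel_low (fun i => g' i t) (fun i => g'' i t) a b e).
Proof.
  intro Ht.
  assert (Dg : forall i, Derive (fun x => g i x) t = g' i t)
    by (intro; apply is_derive_unique, is_derive_g, Ht).
  assert (Dg' : forall i, Derive (fun x => g' i x) t = g'' i t)
    by (intro; apply is_derive_unique, is_derive_g', Ht).
  unfold christoffel_low, sum4. auto_derive.
  - repeat split; eexists; eauto.
  - rewrite !Dg, !Dg'. ring.
Qed.

Lemma Dv_Gu_diag a b e t : 0 < t ->
  Dv (Gu g a b e) t =
    (christoffel_low (fun i => g' i t) (fun i => g'' i t) a b e * g e t
     - christoffel_low (fun i => g i t) (fun i => g' i t) a b e * g' e t) / g e t ^ 2.
Proof.
  intro Ht. pose proof (g_pos t Ht e).
  apply (Dv_ext_pos _ (fun x => christoffel_low (fun i => g i x) (fun i => g' i x) a b e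
                                / g e x)); auto.
  - intros; apply Gu_diag; auto.
  - apply is_derive_div; auto using is_derive_christoffel_low; lra.
Qed.
End DiagonalMetric.

Section Coefficients.
Variable A : R -> R.
Variable B : nat -> R -> R.
Hypothesis B_0 : forall t, A t / ch t = B 0 t.
Hypothesis is_derive_B :
  forall n t, (n <= 2)%nat -> 0 < t -> is_derive (B n) t (B (S n) t).
Hypothesis coeffs_pos : forall t, 0 < t -> forall i, 0 < coeffs A i t.

Definition cder (i : idx) (n : nat) (t : R) : R := leibniz (fun m => B (m + ord i)) (wt i) n t.

Lemma Dv_B t : 0 < t -> Dv (fun t => A t / cosh (t / 2)) t = B 1 t.
Proof. intro Ht. apply (Dv_ext_pos _ (B 0)); auto. Qed.

Lemma coeffs_cder i t : 0 < t -> coeffs A i t = cder i 0 t.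
Proof.
  intro Ht. pose proof (ch_pos t).
  destruct i; unfold coeffs, cder, leibniz, wt, ord; simpl; rewrite ?Dv_B, <- ?B_0 by exact Ht;
    unfold sh, ch in *; first [ring | field; lra].
Qed.

Lemma is_derive_cder i n t : (n <= 1)%nat -> 0 < t ->
  is_derive (cder i n) t (cder i (S n) t).
Proof.
  intros Hn Ht. apply is_derive_leibniz; [lia | |]; intros m Hm.
  - apply is_derive_B; [destruct i; simpl; lia | exact Ht].
  - apply is_derive_wt; [lia | exact Ht].
Qed.

Lemma Derive_cder i n t : (n <= 1)%nat -> 0 < t ->
  Derive (fun x => cder i n x) t = cder i (S n) t.
Proof. intros. apply is_derive_unique, is_derive_cder; auto. Qed.

Lemma is_derive_coeffs i t : 0 < t -> is_derive (coeffs A i) t (cder i 1 t).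
Proof.
  intro Ht. apply (is_derive_ext_pos _ (cder i 0)); auto using coeffs_cder.
  apply is_derive_cder; auto.
Qed.

Lemma cder_pos i t : 0 < t -> 0 < cder i 0 t.
Proof. intro Ht. rewrite <- coeffs_cder; auto. Qed.

Lemma B_pos t : 0 < t -> 0 < B 0 t /\ 0 < B 1 t.
Proof.
  intro Ht. pose proof (cder_pos I1 t Ht) as H1. pose proof (cder_pos I0 t Ht) as H0.
  pose proof (Rinv_0_lt_compat _ (Rmult_lt_0_compat 8 _ ltac:(lra) (sh_pos t Ht))).
  pose proof (ch_pos t).
  unfold cder, leibniz, wt, ord in H0, H1. simpl in H0, H1.
  split; [apply (Rmult_lt_reg_r (ch t)) | apply (Rmult_lt_reg_r (/ (8 * sh t)))]; lra.
Qed.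

Ltac cder_side t :=
  repeat match goal with
  | |- _ /\ _ => split
  | |- ex_derive (fun x => cder ?i ?n x) t =>
      exists (cder i (S n) t); apply is_derive_cder; [lia | assumption]
  end; derive_side.

(* Keeps [auto_derive] from unfolding [cder] into its [leibniz] expansion. *)
Opaque cder.

Definition logder (t : R) : R :=
  cder I0 1 t / cder I0 0 t + cder I1 1 t / cder I1 0 t - sh t / ch t.

Definition logder' (t : R) : R :=
  (cder I0 2 t * cder I0 0 t - cder I0 1 t ^ 2) / cder I0 0 t ^ 2
  + (cder I1 2 t * cder I1 0 t - cder I1 1 t ^ 2) / cder I1 0 t ^ 2
  - (ch t ^ 2 - sh t ^ 2) / (2 * ch t ^ 2).

Lemma is_derive_logder t : 0 < t -> is_derive logder t (logder' t).
Proof.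
  intro Ht. pose proof (cder_pos I0 t Ht). pose proof (cder_pos I1 t Ht).
  pose proof (ch_pos t). unfold logder, logder'.
  auto_derive; cder_side t.
  rewrite !Derive_cder, Derive_sh, Derive_ch by (lia || assumption).
  field. lra.
Qed.

Lemma Cfun_logder t : 0 < t -> Cfun A t = - 4 * sh t * ch t * logder t - 8 * ch t ^ 2.
Proof.
  intro Ht. pose proof (cder_pos I0 t Ht). pose proof (cder_pos I1 t Ht).
  pose proof (ch_pos t). unfold Cfun.
  rewrite (Dv_ext_pos _ (fun t => ln (cder I0 0 t * cder I1 0 t / ch t ^ 2)) t (logder t));
    [reflexivity | exact Ht | intros; rewrite !coeffs_cder; auto |].
  unfold logder. auto_derive; cder_side t.
  - apply Rdiv_lt_0_compat;
      [apply Rmult_lt_0_compat | rewrite Rmult_1_r; apply Rmult_lt_0_compat]; lra.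
  - rewrite !Derive_cder, Derive_ch by (lia || assumption). field. lra.
Qed.

Lemma Dv_Cfun t : 0 < t ->
  Dv (fun t => Cfun A t / cosh (t / 2)) t
  = - 2 * ch t * logder t - 4 * sh t * logder' t - 4 * sh t.
Proof.
  intro Ht. apply (Dv_ext_pos _ (fun t => - 4 * sh t * logder t - 8 * ch t)); auto.
  - intros u Hu. rewrite Cfun_logder by exact Hu. pose proof (ch_pos u).
    unfold ch in *. field. lra.
  - assert (Dl : Derive (fun x => logder x) t = logder' t)
      by (apply is_derive_unique, is_derive_logder, Ht).
    auto_derive.
    + repeat split; auto using ex_derive_sh, ex_derive_ch.
      exists (logder' t); apply is_derive_logder, Ht.
    + rewrite Dl, Derive_sh, Derive_ch. field.
Qed.

Transparent cder.

Lemma Ric_coeffs b c s : 0 < s ->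
  Ric (coeffs A) b c s = if idx_eqb b c then coeffs (Cfun A) b s else 0.
Proof.
  intro Hs. destruct (B_pos s Hs) as [HB0 HB1].
  assert (HE : 1 < exp (s / 2)) by (rewrite <- exp_0; apply exp_increasing; lra).
  pose proof is_derive_coeffs as Hg.
  assert (Hg' : forall i t, 0 < t -> is_derive (cder i 1) t (cder i 2 t))
    by (intros; apply is_derive_cder; auto).
  unfold Ric, Riem, sum4.
  destruct b, c; cbn [Ef idx_eqb];
    rewrite ?(Dv_Gu_diag _ _ _ Hg Hg' coeffs_pos), ?(Gu_diag _ _ Hg) by exact Hs;
    unfold christoffel_low, sum4; rewrite ?coeffs_cder by exact Hs;
    unfold coeffs; rewrite ?Dv_Cfun, ?Cfun_logder by exact Hs;
    unfold koszul_cst, koszul_der, logder, logder', cder, leibniz, wt, ord;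
    cbn [idx_eqb andb Nat.add];
    unfold cst; cbn [emat coord mbracket mmul msub e1 e2 e3];
    unfold sh, ch, sinh, cosh in *; rewrite exp_Ropp in *;
    generalize (B 0 s) (B 1 s) (B 2 s) (B 3 s) (exp (s / 2)) HB0 HB1 HE; clear;
    intros b0 b1 b2 b3 x H0 H1 HE;
    field; repeat split; nra.
Qed.
End Coefficients.

Theorem proposition3p3 :
  forall A : R -> R,
    smooth_pos A ->
    (forall s, 0 < s -> forall i, 0 < coeffs A i s) ->
    forall s, 0 < s -> forall b c : idx,
      Ric (coeffs A) b c s =
        (if idx_eqb b c then coeffs (Cfun A) b s else 0).
Proof.
  intros A [f [f_0 f_der]] Hpos s Hs b c.
  apply (Ric_coeffs A (leibniz f (wt I3))); auto.
  - intro t. pose proof (ch_pos t). unfold leibniz, wt. rewrite f_0. field. lra.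
  - intros n t Hn Ht. apply is_derive_leibniz; auto; intros m Hm.
    + apply is_derive_Reals, f_der, Ht.
    + apply is_derive_wt; [lia | exact Ht].
Qed.
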